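(* Let $n\ge2$ and consider $n$ qubits, $\mathcal H=(\mathbb C^2)^{\otimes n}$, in the drift-less setting with neighborhoods $\mathcal N_1,\dots,\mathcal N_M$ each satisfying $|\mathcal N_k|<n/2$ (i.e. no neighborhood contains $n/2$ qubits if $n$ is even, or $(n+1)/2$ qubits if $n$ is odd). Then the GHZ state $\rho_{\mathrm{GHZ}}=|\Psi_{\mathrm{GHZ}}\rangle\langle\Psi_{\mathrm{GHZ}}|$, $|\Psi_{\mathrm{GHZ}}\rangle=(|0\rangle^{\otimes n}+|1\rangle^{\otimes n})/\sqrt2$, is not QLS.
   Context: Neighborhoods are subsets of $\{1,\dots,n\}$. QL operator: $X_{\mathcal N_k}\otimes I_{\bar{\mathcal N}_k}$; QL Hamiltonian: sum of Hermitian QL operators. $\mathcal L(H,\{D_k\})(\rho)=-i[H,\rho]+\sum_k(D_k\rho D_k^\dagger-\frac12\{D_k^\dagger D_k,\rho\})$. A pure state $\rho_d=|\Psi\rangle\langle\Psi|$ is QLS if there exist a QL Hamiltonian $H_c$ and finitely many QL operators $D_k$ with $D_k|\Psi\rangle=0$ and $H_c|\Psi\rangle\in\mathbb R|\Psi\rangle$ such that $e^{\mathcal L(H_c,\{D_k\})t}(\rho_0)\to\rho_d$ for every density operator $\rho_0$. *)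

From Stdlib Require Import Reals Lra Lia Arith List.
Import ListNotations.
Open Scope R_scope.

Record C := mkC { re : R; im : R }.
Definition C0 : C := mkC 0 0.
Definition C1 : C := mkC 1 0.
Definition Cadd (a b : C) : C := mkC (re a + re b) (im a + im b).
Definition Copp (a : C) : C := mkC (- re a) (- im a).
Definition Cmul (a b : C) : C :=
  mkC (re a * re b - im a * im b) (re a * im b + im a * re b).
Definition Cconj (a : C) : C := mkC (re a) (- im a).
Definition Csum (d : nat) (f : nat -> C) : C :=
  fold_right (fun k acc => Cadd (f k) acc) C0 (seq 0 d).

(* ---------- d x d complex matrices / vectors (only indices < d matter) ---------- *)
Definition Mat := nat -> nat -> C.
Definition Vec := nat -> C.
Definition Mzero : Mat := fun _ _ => C0.
Definition Madd (A B : Mat) : Mat := fun i j => Cadd (A i j) (B i j).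
Definition Msub (A B : Mat) : Mat := fun i j => Cadd (A i j) (Copp (B i j)).
Definition Mscale (c : C) (A : Mat) : Mat := fun i j => Cmul c (A i j).
Definition Mmul (d : nat) (A B : Mat) : Mat :=
  fun i j => Csum d (fun k => Cmul (A i k) (B k j)).
Definition Madj (A : Mat) : Mat := fun i j => Cconj (A j i).
Definition Msum (As : list Mat) : Mat := fold_right Madd Mzero As.
Definition Mapply (d : nat) (A : Mat) (v : Vec) : Vec :=
  fun i => Csum d (fun k => Cmul (A i k) (v k)).

Definition Hermitian (d : nat) (A : Mat) : Prop :=
  forall i j, (i < d)%nat -> (j < d)%nat -> A i j = Cconj (A j i).

Definition density (d : nat) (A : Mat) : Prop :=
  Hermitian d A /\
  (forall v : Vec, 0 <= re (Csum d (fun i => Cmul (Cconj (v i)) (Mapply d A v i)))) /\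
  Csum d (fun i => A i i) = C1.

Definition proj (psi : Vec) : Mat := fun i j => Cmul (psi i) (Cconj (psi j)).

(* ---------- quasi-locality on n qubits ----------
   Basis index i < 2^n; qubit q (0 <= q < n) is bit q of i.
   Neighborhoods are lists of qubits (subsets of {0,...,n-1}). *)
Definition mask (N : list nat) : nat := fold_right (fun q acc => (2 ^ q + acc)%nat) 0%nat N.

Definition agree_off (n : nat) (N : list nat) (i j : nat) : Prop :=
  forall q, (q < n)%nat -> ~ In q N -> Nat.testbit i q = Nat.testbit j q.

(* A = X_N (x) I_{complement of N}: entries X[i_N, j_N] * delta(i_Nbar, j_Nbar) *)
Definition QL_on (n : nat) (N : list nat) (A : Mat) : Prop :=
  exists X : nat -> nat -> C,
    forall i j, (i < 2 ^ n)%nat -> (j < 2 ^ n)%nat ->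
      (agree_off n N i j -> A i j = X (Nat.land i (mask N)) (Nat.land j (mask N))) /\
      (~ agree_off n N i j -> A i j = C0).

Definition QL_op (n : nat) (Ns : list (list nat)) (A : Mat) : Prop :=
  exists k, (k < length Ns)%nat /\ QL_on n (nth k Ns []) A.

Definition dissip (d : nat) (D rho : Mat) : Mat :=
  Msub (Mmul d (Mmul d D rho) (Madj D))
       (Mscale (mkC (1/2) 0)
          (Madd (Mmul d (Mmul d (Madj D) D) rho) (Mmul d rho (Mmul d (Madj D) D)))).

Definition Lindblad (d : nat) (H : Mat) (Ds : list Mat) (rho : Mat) : Mat :=
  Madd (Mscale (mkC 0 (-1)) (Msub (Mmul d H rho) (Mmul d rho H)))
       (fold_right (fun D acc => Madd (dissip d D rho) acc) Mzero Ds).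

Definition exp_partial (L : Mat -> Mat) (t : R) (rho0 : Mat) (N : nat) : Mat :=
  fold_right (fun k acc =>
      Madd (Mscale (mkC (t ^ k / INR (fact k)) 0) (Nat.iter k L rho0)) acc)
    Mzero (seq 0 (S N)).

(* rho = e^{L t}(rho0), i.e. rho is the (entrywise) limit of the exponential series *)
Definition is_exp (d : nat) (L : Mat -> Mat) (t : R) (rho0 rho : Mat) : Prop :=
  forall i j, (i < d)%nat -> (j < d)%nat ->
    Un_cv (fun N => re (exp_partial L t rho0 N i j)) (re (rho i j)) /\
    Un_cv (fun N => im (exp_partial L t rho0 N i j)) (im (rho i j)).

Definition exp_converges (d : nat) (L : Mat -> Mat) (rho0 rhod : Mat) : Prop :=
  forall eps, eps > 0 -> exists T : R, forall t rho, t >= T -> is_exp d L t rho0 rho ->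
    forall i j, (i < d)%nat -> (j < d)%nat ->
      Rabs (re (rho i j) - re (rhod i j)) < eps /\
      Rabs (im (rho i j) - im (rhod i j)) < eps.

(* Quasi-locally stabilizable pure state |psi><psi| on n qubits.
   The QL Hamiltonian H_c is Msum Hs with each summand a Hermitian QL operator. *)
Definition QLS (n : nat) (Ns : list (list nat)) (psi : Vec) : Prop :=
  let d := (2 ^ n)%nat in
  exists (Hs Ds : list Mat),
    Forall (fun h => Hermitian d h /\ QL_op n Ns h) Hs /\
    Forall (QL_op n Ns) Ds /\
    Forall (fun D => forall i, (i < d)%nat -> Mapply d D psi i = C0) Ds /\
    (exists r : R, forall i, (i < d)%nat ->
        Mapply d (Msum Hs) psi i = Cmul (mkC r 0) (psi i)) /\
    (forall rho0, density d rho0 ->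
        exp_converges d (Lindblad d (Msum Hs) Ds) rho0 (proj psi)).

Definition ghz (n : nat) : Vec :=
  fun i => if (Nat.eqb i 0 || Nat.eqb i (2 ^ n - 1))%bool
           then mkC (/ sqrt 2) 0 else C0.

Definition neighborhood (n : nat) (N : list nat) : Prop :=
  NoDup N /\ Forall (fun q => (q < n)%nat) N.

(* An operator acting on a neighborhood N only connects basis states
   |i>, |j> whose bits agree outside N.  Since |0...0> and |1...1> differ in
   all n qubits, no basis state can be connected by such operators both to
   |0...0> and to |1...1> when |N| + |N'| < n.  Hence, if A is a sum of such
   operators and A|GHZ> = c|GHZ>, the two halves of |GHZ> cannot cancel each
   other and A|0...0> = c|0...0>.  Applied to the Hamiltonian (real c) and to
   the dissipators (c = 0), this shows that rho_0 = |0...0><0...0| satisfies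
   L(rho_0) = 0, so e^{Lt}(rho_0) = rho_0 for every t; but rho_0 differs from
   rho_GHZ (their (0,0) entries are 1 and 1/2), contradicting convergence. *)

From Pilot Require Import Defs.
From Stdlib Require Import Reals Arith List Lra Lia Classical.
(* Re-import so that [C] denotes the complex numbers, not Reals' binomial. *)
Import Pilot.Defs.
Import ListNotations.
Open Scope R_scope.

Lemma Ceq (a b : C) : re a = re b -> im a = im b -> a = b.
Proof. destruct a, b; simpl; intros; subst; reflexivity. Qed.

Ltac ceq := apply Ceq; cbn [re im Cadd Cmul Copp Cconj C0 C1]; ring.

Definition Csum_from (f : nat -> C) (s len : nat) : C :=
  fold_right (fun k acc => Cadd (f k) acc) C0 (seq s len).

Lemma Csum_from_S f s len : Csum_from f s (S len) = Cadd (f s) (Csum_from f (S s) len).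
Proof. reflexivity. Qed.

Lemma Csum_from_zero f len : forall s,
  (forall k, (s <= k < s + len)%nat -> f k = C0) -> Csum_from f s len = C0.
Proof.
  induction len as [|len IH]; intros s Hf; [reflexivity|].
  rewrite Csum_from_S, Hf, IH by (try lia; intros; apply Hf; lia). ceq.
Qed.

Lemma Csum_from_delta f m len : forall s, (s <= m < s + len)%nat ->
  (forall k, (s <= k < s + len)%nat -> k <> m -> f k = C0) -> Csum_from f s len = f m.
Proof.
  induction len as [|len IH]; intros s Hm Hf; [lia|]. rewrite Csum_from_S.
  destruct (Nat.eq_dec s m) as [->|Hsm].
  - rewrite Csum_from_zero by (intros; apply Hf; lia). ceq.
  - rewrite Hf, IH by (try lia; intros; apply Hf; lia). ceq.
Qed.

Lemma Csum_from_delta2 f m1 m2 len : forall s,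
  (s <= m1 < s + len)%nat -> (s <= m2 < s + len)%nat -> m1 <> m2 ->
  (forall k, (s <= k < s + len)%nat -> k <> m1 -> k <> m2 -> f k = C0) ->
  Csum_from f s len = Cadd (f m1) (f m2).
Proof.
  induction len as [|len IH]; intros s H1 H2 Hne Hf; [lia|]. rewrite Csum_from_S.
  destruct (Nat.eq_dec s m1) as [->|Hs1].
  - rewrite (Csum_from_delta f m2) by (try lia; intros; apply Hf; lia). reflexivity.
  - destruct (Nat.eq_dec s m2) as [->|Hs2].
    + rewrite (Csum_from_delta f m1) by (try lia; intros; apply Hf; lia). ceq.
    + rewrite Hf, IH by (try lia; intros; apply Hf; lia). ceq.
Qed.

Lemma Csum_zero d f : (forall k, (k < d)%nat -> f k = C0) -> Csum d f = C0.
Proof. intros Hf. apply (Csum_from_zero f d 0). intros; apply Hf; lia. Qed.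

Lemma Csum_delta d f m : (m < d)%nat ->
  (forall k, (k < d)%nat -> k <> m -> f k = C0) -> Csum d f = f m.
Proof. intros Hm Hf. apply (Csum_from_delta f m d 0); [lia|]. intros; apply Hf; lia. Qed.

Lemma Csum_delta2 d f m1 m2 : (m1 < d)%nat -> (m2 < d)%nat -> m1 <> m2 ->
  (forall k, (k < d)%nat -> k <> m1 -> k <> m2 -> f k = C0) ->
  Csum d f = Cadd (f m1) (f m2).
Proof.
  intros H1 H2 Hne Hf. apply (Csum_from_delta2 f m1 m2 d 0); try lia.
  intros; apply Hf; lia.
Qed.

Lemma Mmul_row_supported d A X m i j : (m < d)%nat ->
  (forall k, (k < d)%nat -> k <> m -> X k j = C0) ->
  Mmul d A X i j = Cmul (A i m) (X m j).
Proof. intros Hm HX. unfold Mmul. rewrite (Csum_delta d _ m); auto. intros; rewrite HX; auto; ceq. Qed.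

Lemma Mmul_col_supported d A X m i j : (m < d)%nat ->
  (forall k, (k < d)%nat -> k <> m -> A i k = C0) ->
  Mmul d A X i j = Cmul (A i m) (X m j).
Proof. intros Hm HA. unfold Mmul. rewrite (Csum_delta d _ m); auto. intros; rewrite HA; auto; ceq. Qed.

Lemma Mmul_zero_row d A X i j : (forall k, (k < d)%nat -> A i k = C0) -> Mmul d A X i j = C0.
Proof. intros HA. unfold Mmul. apply Csum_zero. intros; rewrite HA; auto; ceq. Qed.

Lemma Mmul_zero_col d A X i j : (forall k, (k < d)%nat -> X k j = C0) -> Mmul d A X i j = C0.
Proof. intros HX. unfold Mmul. apply Csum_zero. intros; rewrite HX; auto; ceq. Qed.

(** * No basis state is close to both |0...0> and |1...1> *)

Lemma dim_ge_4 n : (2 <= n)%nat -> (4 <= 2 ^ n)%nat.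
Proof. intros. change 4%nat with (2 ^ 2)%nat. apply Nat.pow_le_mono_r; lia. Qed.

Lemma exists_unlisted_qubit n (L : list nat) :
  (length L < n)%nat -> exists q, (q < n)%nat /\ ~ In q L.
Proof.
  intros Hlen. apply NNPP; intros Hnone.
  assert (Hincl : incl (seq 0 n) L).
  { intros q Hq. apply in_seq in Hq. apply NNPP; intros Hq'.
    apply Hnone; exists q; split; [lia | exact Hq']. }
  pose proof (NoDup_incl_length (seq_NoDup n 0) Hincl) as Hle.
  rewrite length_seq in Hle. lia.
Qed.

Lemma testbit_all_ones n q : (q < n)%nat -> Nat.testbit (2 ^ n - 1) q = true.
Proof. intros. rewrite Nat.sub_1_r, <- Nat.ones_equiv. apply Nat.ones_spec_low; auto. Qed.

Lemma no_bridge n N N' i :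
  agree_off n N i 0 -> agree_off n N' i (2 ^ n - 1) -> (length N + length N' < n)%nat -> False.
Proof.
  intros H0 H1 Hlen.
  destruct (exists_unlisted_qubit n (N ++ N')) as [q [Hq Hout]]; [rewrite length_app; lia|].
  rewrite in_app_iff in Hout.
  specialize (H0 q Hq (fun h => Hout (or_introl h))).
  specialize (H1 q Hq (fun h => Hout (or_intror h))).
  rewrite Nat.bits_0 in H0. rewrite testbit_all_ones in H1 by exact Hq. congruence.
Qed.

Definition short_range (n : nat) (A : Mat) : Prop :=
  forall i j, (i < 2 ^ n)%nat -> (j < 2 ^ n)%nat -> A i j <> C0 ->
    exists N, (2 * length N < n)%nat /\ agree_off n N i j.

Lemma QL_op_short_range n Ns A :
  Forall (fun N => neighborhood n N /\ (2 * length N < n)%nat) Ns ->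
  QL_op n Ns A -> short_range n A.
Proof.
  intros HNs [k [Hk [X HX]]] i j Hi Hj Hnz. exists (nth k Ns []). split.
  - rewrite Forall_forall in HNs. apply (HNs _ (nth_In _ _ Hk)).
  - apply NNPP; intros Hoff. apply Hnz, (proj2 (HX i j Hi Hj)), Hoff.
Qed.

Lemma short_range_Msum n As : Forall (short_range n) As -> short_range n (Msum As).
Proof.
  induction 1 as [|A As HA _ IH]; intros i j Hi Hj Hnz.
  - exfalso; apply Hnz; reflexivity.
  - destruct (classic (A i j = C0)) as [HA0|HA0].
    + apply IH; auto. intros Hs; apply Hnz. simpl. unfold Madd. rewrite HA0, Hs. ceq.
    + apply HA; auto.
Qed.

Section ShortRange.

Variables (n : nat) (A : Mat).
Hypothesis (Hn : (2 <= n)%nat) (HA : short_range n A).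

Lemma short_range_no_bridge i : (i < 2 ^ n)%nat ->
  A i 0%nat = C0 \/ A i (2 ^ n - 1)%nat = C0.
Proof.
  intros Hi. pose proof (dim_ge_4 n Hn).
  destruct (classic (A i 0%nat = C0)) as [|H0]; [now left|].
  destruct (classic (A i (2 ^ n - 1)%nat = C0)) as [|H1]; [now right|].
  destruct (HA i 0%nat) as [N [HN HagN]]; try lia; auto.
  destruct (HA i (2 ^ n - 1)%nat) as [N' [HN' HagN']]; try lia; auto.
  exfalso; apply (no_bridge n N N' i); auto; lia.
Qed.

Lemma short_range_corner_low : A (2 ^ n - 1)%nat 0%nat = C0.
Proof.
  pose proof (dim_ge_4 n Hn). apply NNPP; intros Hnz.
  destruct (HA (2 ^ n - 1)%nat 0%nat) as [N [HN HagN]]; try lia; auto.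
  exfalso; apply (no_bridge n N N (2 ^ n - 1)); auto; [intros ? ? ?; reflexivity | lia].
Qed.

Lemma short_range_corner_high : A 0%nat (2 ^ n - 1)%nat = C0.
Proof.
  pose proof (dim_ge_4 n Hn). apply NNPP; intros Hnz.
  destruct (HA 0%nat (2 ^ n - 1)%nat) as [N [HN HagN]]; try lia; auto.
  exfalso; apply (no_bridge n N N 0); auto; [intros ? ? ?; reflexivity | lia].
Qed.

End ShortRange.

Definition inv_sqrt2 : C := mkC (/ sqrt 2) 0.

Lemma ghz_first n : ghz n 0%nat = inv_sqrt2.
Proof. reflexivity. Qed.

Lemma ghz_last n : (2 ^ n - 1 <> 0)%nat -> ghz n (2 ^ n - 1)%nat = inv_sqrt2.
Proof. intros. unfold ghz. rewrite Nat.eqb_refl, Bool.orb_true_r. reflexivity. Qed.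

Lemma ghz_middle n i : i <> 0%nat -> i <> (2 ^ n - 1)%nat -> ghz n i = C0.
Proof.
  intros H0 H1. unfold ghz.
  rewrite (proj2 (Nat.eqb_neq _ _) H0), (proj2 (Nat.eqb_neq _ _) H1). reflexivity.
Qed.

Lemma Mapply_ghz n A i : (2 <= n)%nat ->
  Mapply (2 ^ n) A (ghz n) i = Cmul (Cadd (A i 0%nat) (A i (2 ^ n - 1)%nat)) inv_sqrt2.
Proof.
  intros Hn. pose proof (dim_ge_4 n Hn). unfold Mapply.
  rewrite (Csum_delta2 _ _ 0 (2 ^ n - 1)); try lia.
  - rewrite ghz_first, ghz_last by lia. ceq.
  - intros. rewrite ghz_middle by auto. ceq.
Qed.

Lemma Cmul_inv_sqrt2_inj x y : Cmul x inv_sqrt2 = Cmul y inv_sqrt2 -> x = y.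
Proof.
  intros Hxy.
  assert (Hs : / sqrt 2 <> 0)
    by (apply Rinv_neq_0_compat, Rgt_not_eq, sqrt_lt_R0; lra).
  assert (Hre : re (Cmul x inv_sqrt2) = re (Cmul y inv_sqrt2)) by (rewrite Hxy; auto).
  assert (Him : im (Cmul x inv_sqrt2) = im (Cmul y inv_sqrt2)) by (rewrite Hxy; auto).
  cbn in Hre, Him. apply Ceq; apply (Rmult_eq_reg_r (/ sqrt 2)); auto; lra.
Qed.

Lemma ghz_eigen_column n A c : (2 <= n)%nat -> short_range n A ->
  (forall i, (i < 2 ^ n)%nat -> Mapply (2 ^ n) A (ghz n) i = Cmul c (ghz n i)) ->
  forall i, (i < 2 ^ n)%nat -> A i 0%nat = if Nat.eqb i 0 then c else C0.
Proof.
  intros Hn HA Heig i Hi. pose proof (dim_ge_4 n Hn).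
  specialize (Heig i Hi). rewrite Mapply_ghz in Heig by exact Hn.
  destruct (Nat.eq_dec i 0) as [->|Hi0]; simpl.
  - rewrite ghz_first, short_range_corner_high in Heig by auto.
    apply Cmul_inv_sqrt2_inj. rewrite <- Heig. ceq.
  - rewrite (proj2 (Nat.eqb_neq _ _) Hi0).
    destruct (Nat.eq_dec i (2 ^ n - 1)) as [->|Hi1]; [apply short_range_corner_low; auto|].
    rewrite ghz_middle in Heig by auto.
    assert (Hcancel : Cadd (A i 0%nat) (A i (2 ^ n - 1)%nat) = C0)
      by (apply Cmul_inv_sqrt2_inj; rewrite Heig; ceq).
    destruct (short_range_no_bridge n A Hn HA i Hi) as [|Hlast]; auto.
    rewrite <- Hcancel, Hlast. ceq.
Qed.

(** * The state |0...0><0...0| is stationary *)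

Definition ket0_proj : Mat := fun i j => if (Nat.eqb i 0 && Nat.eqb j 0)%bool then C1 else C0.

Lemma ket0_proj_row k j : k <> 0%nat -> ket0_proj k j = C0.
Proof. intros. unfold ket0_proj. rewrite (proj2 (Nat.eqb_neq _ _) H). reflexivity. Qed.

Lemma ket0_proj_col i k : k <> 0%nat -> ket0_proj i k = C0.
Proof.
  intros. unfold ket0_proj. rewrite (proj2 (Nat.eqb_neq _ _) H), Bool.andb_false_r. reflexivity.
Qed.

Lemma ket0_proj_density d : (0 < d)%nat -> density d ket0_proj.
Proof.
  intros Hd.
  assert (Happ : forall v i, Mapply d ket0_proj v i = Cmul (ket0_proj i 0%nat) (v 0%nat)).
  { intros v i. unfold Mapply. rewrite (Csum_delta d _ 0); auto. intros; rewrite ket0_proj_col; auto; ceq. }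
  split; [|split].
  - intros i j _ _. unfold ket0_proj. destruct (Nat.eqb i 0), (Nat.eqb j 0); simpl; ceq.
  - intros v. rewrite (Csum_delta d _ 0) by (auto; intros; rewrite Happ, ket0_proj_row; auto; ceq).
    rewrite Happ. cbn [ket0_proj Nat.eqb andb re im Cmul Cconj C1]. nra.
  - rewrite (Csum_delta d _ 0); auto. intros; apply ket0_proj_row; auto.
Qed.

Lemma dissip_ket0_proj d D : (0 < d)%nat ->
  (forall i, (i < d)%nat -> D i 0%nat = C0) ->
  forall i j, (i < d)%nat -> (j < d)%nat -> dissip d D ket0_proj i j = C0.
Proof.
  intros Hd HD i j Hi Hj. unfold dissip, Msub, Mscale, Madd.
  rewrite (Mmul_zero_row d (Mmul d D ket0_proj) (Madj D)).
  2:{ intros k Hk. rewrite (Mmul_row_supported d D ket0_proj 0) by (auto; intros; apply ket0_proj_row; auto).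
      rewrite HD by exact Hi. ceq. }
  rewrite (Mmul_row_supported d (Mmul d (Madj D) D) ket0_proj 0)
    by (auto; intros; apply ket0_proj_row; auto).
  rewrite (Mmul_col_supported d ket0_proj (Mmul d (Madj D) D) 0)
    by (auto; intros; apply ket0_proj_col; auto).
  rewrite (Mmul_zero_col d (Madj D) D i 0%nat) by (intros; apply HD; auto).
  rewrite (Mmul_zero_row d (Madj D) D 0%nat j) by (intros k Hk; unfold Madj; rewrite HD; auto; ceq).
  ceq.
Qed.

Lemma dissip_sum_zero d Ds X i j : (forall D, In D Ds -> dissip d D X i j = C0) ->
  fold_right (fun D acc => Madd (dissip d D X) acc) Mzero Ds i j = C0.
Proof.
  induction Ds as [|D Ds IH]; intros HDs; [reflexivity|]. simpl. unfold Madd at 1.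
  rewrite HDs by (left; reflexivity).
  rewrite IH by (intros; apply HDs; right; assumption). ceq.
Qed.

Lemma Lindblad_ket0_proj d H Ds r : (0 < d)%nat -> Hermitian d H ->
  (forall i, (i < d)%nat -> H i 0%nat = if Nat.eqb i 0 then mkC r 0 else C0) ->
  (forall D, In D Ds -> forall i, (i < d)%nat -> D i 0%nat = C0) ->
  forall i j, (i < d)%nat -> (j < d)%nat -> Lindblad d H Ds ket0_proj i j = C0.
Proof.
  intros Hd Hherm HH HDs i j Hi Hj. unfold Lindblad, Madd at 1, Mscale at 1, Msub at 1.
  rewrite dissip_sum_zero by (intros D HD; apply dissip_ket0_proj; auto).
  rewrite (Mmul_row_supported d H ket0_proj 0) by (auto; intros; apply ket0_proj_row; auto).
  rewrite (Mmul_col_supported d ket0_proj H 0) by (auto; intros; apply ket0_proj_col; auto).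
  rewrite (Hherm 0%nat j), HH, HH by (auto || lia).
  unfold ket0_proj. destruct (Nat.eqb i 0), (Nat.eqb j 0); simpl; ceq.
Qed.

Lemma Lindblad_of_zero d H Ds X : (forall i j, (i < d)%nat -> (j < d)%nat -> X i j = C0) ->
  forall i j, (i < d)%nat -> (j < d)%nat -> Lindblad d H Ds X i j = C0.
Proof.
  intros HX i j Hi Hj. unfold Lindblad, Madd at 1, Mscale at 1, Msub at 1.
  rewrite dissip_sum_zero.
  - rewrite (Mmul_zero_col d H X), (Mmul_zero_row d X H) by (intros; apply HX; auto). ceq.
  - intros D _. unfold dissip, Msub, Mscale, Madd.
    rewrite (Mmul_zero_row d (Mmul d D X) (Madj D))
      by (intros; apply Mmul_zero_col; intros; apply HX; auto).
    rewrite (Mmul_zero_col d _ X), (Mmul_zero_row d X) by (intros; apply HX; auto). ceq.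
Qed.

Lemma Un_cv_const u l : (forall N, u N = l) -> Un_cv u l.
Proof.
  intros Hu eps Heps. exists 0%nat. intros N _. unfold R_dist. rewrite Hu.
  replace (l - l) with 0 by ring. rewrite Rabs_R0; lra.
Qed.

Section Stationary.

Variables (d : nat) (H : Mat) (Ds : list Mat) (X : Mat).
Let L := Lindblad d H Ds.
Hypothesis HX : forall i j, (i < d)%nat -> (j < d)%nat -> L X i j = C0.

Lemma stationary_iter k i j : (1 <= k)%nat -> (i < d)%nat -> (j < d)%nat ->
  Nat.iter k L X i j = C0.
Proof.
  destruct k as [|k]; [lia|]. revert i j. induction k as [|k IH]; intros i j _ Hi Hj.
  - apply HX; auto.
  - apply Lindblad_of_zero; auto. intros; apply IH; auto; lia.
Qed.

Lemma stationary_exp_partial t N i j : (i < d)%nat -> (j < d)%nat ->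
  exp_partial L t X N i j = X i j.
Proof.
  intros Hi Hj.
  assert (Htail : forall len s, (1 <= s)%nat ->
     fold_right (fun k acc => Madd (Mscale (mkC (t ^ k / INR (fact k)) 0) (Nat.iter k L X)) acc)
       Mzero (seq s len) i j = C0).
  { induction len as [|len IH]; intros s Hs; [reflexivity|].
    simpl. unfold Madd at 1, Mscale at 1. rewrite IH, stationary_iter by (auto || lia). ceq. }
  unfold exp_partial. simpl. unfold Madd at 1, Mscale at 1.
  rewrite Htail by lia. apply Ceq; simpl; field.
Qed.

Lemma stationary_limit Y : exp_converges d L X Y ->
  forall i j, (i < d)%nat -> (j < d)%nat -> re (X i j) = re (Y i j).
Proof.
  intros Hconv i j Hi Hj.
  assert (Hexp : forall t, is_exp d L t X X).
  { intros t i' j' Hi' Hj'. split; apply Un_cv_const; intros N;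
      rewrite stationary_exp_partial; auto. }
  apply NNPP; intros Hne.
  set (eps := Rabs (re (X i j) - re (Y i j))).
  assert (Heps : eps > 0) by (apply Rabs_pos_lt; lra).
  destruct (Hconv eps Heps) as [T HT].
  destruct (HT T X (Rge_refl T) (Hexp T) i j Hi Hj) as [Hlt _]. unfold eps in Hlt. lra.
Qed.

End Stationary.

Lemma Hermitian_Msum d As : Forall (Hermitian d) As -> Hermitian d (Msum As).
Proof.
  induction 1 as [|A As HA _ IH]; intros i j Hi Hj; simpl; unfold Madd, Mzero.
  - ceq.
  - rewrite (HA i j), (IH i j) by auto. ceq.
Qed.

Lemma ghz_proj_corner n : re (proj (ghz n) 0%nat 0%nat) = / 2.
Proof.
  unfold proj. rewrite ghz_first. cbn [re im Cmul Cconj inv_sqrt2].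
  rewrite Ropp_0, Rmult_0_l, Rminus_0_r, <- Rinv_mult, sqrt_sqrt by lra. reflexivity.
Qed.

Theorem proposition5 (n : nat) (Ns : list (list nat)) :
  (2 <= n)%nat ->
  Forall (fun N => neighborhood n N /\ (2 * length N < n)%nat) Ns ->
  ~ QLS n Ns (ghz n).
Proof.
  intros Hn HNs [Hs [Ds [HHs [HDs [HDker [[r Hr] Hconv]]]]]].
  pose proof (dim_ge_4 n Hn) as Hd.
  assert (Hshort : short_range n (Msum Hs)).
  { apply short_range_Msum. eapply Forall_impl; [|exact HHs].
    intros h [_ Hh]. eapply QL_op_short_range; eauto. }
  assert (Hherm : Hermitian (2 ^ n) (Msum Hs)).
  { apply Hermitian_Msum. eapply Forall_impl; [|exact HHs]. intros h [Hh _]; exact Hh. }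
  assert (HDcol : forall D, In D Ds -> forall i, (i < 2 ^ n)%nat -> D i 0%nat = C0).
  { intros D HD i Hi. rewrite Forall_forall in HDs, HDker.
    rewrite (ghz_eigen_column n D C0 Hn (QL_op_short_range n Ns D HNs (HDs D HD))); auto.
    - destruct (Nat.eqb i 0); auto.
    - intros k Hk. rewrite (HDker D HD k Hk). ceq. }
  pose proof (Lindblad_ket0_proj (2 ^ n) (Msum Hs) Ds r ltac:(lia) Hherm
                (ghz_eigen_column n _ _ Hn Hshort Hr) HDcol) as Hstat.
  pose proof (stationary_limit _ _ _ _ Hstat _
                (Hconv _ (ket0_proj_density (2 ^ n) ltac:(lia)))
                0%nat 0%nat ltac:(lia) ltac:(lia)) as Hcorner.
  rewrite ghz_proj_corner in Hcorner. simpl in Hcorner. lra.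
Qed.
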